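(* Let $[\mathbf{G}]$ be a random field belonging to $\mathcal{C}^{2,S}_n$ and let $[\mathbf{K}_0]$ be the random field in $\mathcal{C}^+_n$ such that $[\mathbf{K}_0(\mathbf{x})]=\mathbb{L}([\mathbf{G}(\mathbf{x})])$ for all $\mathbf{x}\in D$. Then: (i) there exist two real numbers $0<\gamma_0<+\infty$ and $0<\gamma_1<+\infty$ such that for all $\mathbf{x}\in D$, $\|\mathbf{K}_0(\mathbf{x})\|_F\le\gamma_0+\gamma_1\|\mathbf{G}(\mathbf{x})\|_F^2$ almost surely; moreover $E\{\|\mathbf{K}_0(\mathbf{x})\|_F\}<+\infty$, and if $E\{\|\mathbf{G}(\mathbf{x})\|_F^4\}<+\infty$ then $E\{\|\mathbf{K}_0(\mathbf{x})\|_F^2\}<+\infty$; (ii) if $\|\mathbf{G}(\mathbf{x})\|_F\le\beta_G<+\infty$ almost surely for all $\mathbf{x}\in D$, where $\beta_G$ is a positive random variable independent of $\mathbf{x}$, then $\|\mathbf{K}_0(\mathbf{x})\|_F\le\beta_0<+\infty$ almost surely for all $\mathbf{x}\in D$, where $\beta_0=\gamma_0+\gamma_1\beta_G^2$ is a positive random variable independent of $\mathbf{x}$.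
   Context: Let $d,n\ge1$ be integers and $D\subset\mathbb{R}^d$ a bounded open domain. $\mathbb{M}_n^+(\mathbb{R})$ (resp. $\mathbb{M}_n^S(\mathbb{R})$) is the set of symmetric positive-definite (resp. symmetric) real $n\times n$ matrices; $\|\cdot\|_F$ is the Frobenius norm. $\mathcal{C}^+_n$ is the set of random fields on $D$ (on a probability space) with values in $\mathbb{M}_n^+(\mathbb{R})$; $\mathcal{C}^{2,S}_n$ is the set of random fields $[\mathbf{G}]$ on $D$ with values in $\mathbb{M}_n^S(\mathbb{R})$ with $E\{\|\mathbf{G}(\mathbf{x})\|_F^2\}<+\infty$ for all $\mathbf{x}$. For each real $a>0$, let $g\mapsto h(g;a)$ be a function from $\mathbb{R}$ into $\mathbb{R}^+$ such that (i) $h(\cdot;a)$ is strictly monotonically increasing on $\mathbb{R}$, and (ii) there exist reals $0<c_h<+\infty$ and $0<c_a<+\infty$ with $h(g;a)\le c_a+c_h g^2$ for all $g\in\mathbb{R}$. Fix positive reals $a_1,\dots,a_n$. For $[G]\in\mathbb{M}_n^S(\mathbb{R})$, let $\mathcal{L}([G])$ be the upper triangular $n\times n$ real matrix with $[\mathcal{L}([G])]_{jj'}=[G]_{jj'}$ for $1\le j<j'\le n$ and $[\mathcal{L}([G])]_{jj}=\sqrt{h([G]_{jj};a_j)}$ for $1\le j\le n$, and set $\mathbb{L}([G])=\mathcal{L}([G])^T\mathcal{L}([G])$. *)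

From HB Require Import structures.
From mathcomp Require Import all_boot all_order all_algebra.
From mathcomp Require Import all_classical all_reals all_analysis.
Set Implicit Arguments. Unset Strict Implicit. Unset Printing Implicit Defensive.
Import Order.TTheory GRing.Theory Num.Theory.
Import numFieldNormedType.Exports.
Local Open Scope ring_scope.

Definition frob {R : realType} {n : nat} (A : 'M[R]_n) : R :=
  Num.sqrt (\sum_(i < n) \sum_(j < n) A i j ^+ 2).

Definition symmetric_mx {R : realType} {n : nat} (A : 'M[R]_n) : Prop := A^T = A.

Definition admissible_h {R : realType} (h : R -> R -> R) : Prop :=
  forall a : R, 0 < a ->
    (forall g, 0 < h g a) /\
    (forall g1 g2, g1 < g2 -> h g1 a < h g2 a) /\
    (exists ch ca : R, 0 < ch /\ 0 < ca /\ forall g, h g a <= ca + ch * g ^+ 2).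

Definition Lcal {R : realType} {n : nat} (h : R -> R -> R) (a : 'I_n -> R)
  (G : 'M[R]_n) : 'M[R]_n :=
  \matrix_(i, j) (if (i < j)%N then G i j
                  else if i == j then Num.sqrt (h (G i i) (a i)) else 0).

Definition LL {R : realType} {n : nat} (h : R -> R -> R) (a : 'I_n -> R)
  (G : 'M[R]_n) : 'M[R]_n :=
  (Lcal h a G)^T *m Lcal h a G.

From HB Require Import structures.
From mathcomp Require Import all_boot all_order all_algebra.
From mathcomp Require Import all_classical all_reals all_analysis.
From mathcomp Require Import lra.
Set Implicit Arguments. Unset Strict Implicit. Unset Printing Implicit Defensive.
Import Order.TTheory GRing.Theory Num.Theory.
Import numFieldNormedType.Exports.
Local Open Scope classical_set_scope.
Local Open Scope ring_scope.

(* All bounds are deterministic.  By the growth condition on h, made uniform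
   over the finitely many a_j, the upper triangular factor satisfies
   ||L(G)||^2 <= n c_a + (1 + c_h) ||G||^2, and ||L^T L|| <= n ||L||^2 since
   every entry of L^T L is at most ||L||^2 (as 2|uv| <= u^2 + v^2).
   Integrating this bound and its square gives (i); (ii) is its monotonicity
   in ||G||. *)

Lemma frob_ge0 (R : realType) (n : nat) (A : 'M[R]_n) : 0 <= frob A.
Proof. exact: sqrtr_ge0. Qed.

Lemma sqr_frob (R : realType) (n : nat) (A : 'M[R]_n) :
  frob A ^+ 2 = \sum_i \sum_j A i j ^+ 2.
Proof.
by rewrite sqr_sqrtr // sumr_ge0 // => i _; apply: sumr_ge0 => j _; exact: sqr_ge0.
Qed.

Lemma frob_le_sqr_sum (R : realType) (n : nat) (A : 'M[R]_n) (b : R) :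
  0 <= b -> (forall i j, A i j ^+ 2 <= b) -> frob A <= n%:R * Num.sqrt b.
Proof.
move=> b_ge0 Ab; rewrite /frob -[n%:R]ger0_norm // -sqrtr_sqr -sqrtrM ?sqr_ge0 //.
rewrite ler_sqrt ?mulr_ge0 ?sqr_ge0 //.
apply: le_trans (_ : \sum_(i < n) \sum_(j < n) b <= _).
  by apply: ler_sum => i _; apply: ler_sum => j _.
by rewrite !sumr_const card_ord expr2 -mulrA !mulr_natl.
Qed.

Lemma sum_sqr_col_le_frob (R : realType) (n : nat) (A : 'M[R]_n) j :
  \sum_k A k j ^+ 2 <= frob A ^+ 2.
Proof.
rewrite sqr_frob; apply: ler_sum => k _.
by rewrite (bigD1 j) //= lerDl sumr_ge0 // => l _; exact: sqr_ge0.
Qed.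

Lemma normr_mulmx_tr_le (R : realType) (n : nat) (A : 'M[R]_n) i j :
  `|(A^T *m A) i j| <= frob A ^+ 2.
Proof.
have amgm (u v : R) : `|u * v| *+ 2 <= u ^+ 2 + v ^+ 2.
  rewrite normrM -(real_normK (num_real u)) -(real_normK (num_real v)) mulr2n.
  by have := sqr_ge0 (`|u| - `|v|); rewrite sqrrB; lra.
rewrite -(ler_pMn2r (_ : 0 < 2)%N) // mxE.
apply: le_trans (_ : \sum_k (A k i ^+ 2 + A k j ^+ 2) <= _).
  apply: le_trans (_ : (\sum_k `|A k i * A k j|) *+ 2 <= _).
    by rewrite lerMn2r /=; under eq_bigr do rewrite mxE; exact: ler_norm_sum.
  by rewrite -sumrMnl; apply: ler_sum => k _; rewrite amgm.
by rewrite big_split mulr2n lerD // sum_sqr_col_le_frob.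
Qed.

Lemma frob_mulmx_tr_le (R : realType) (n : nat) (A : 'M[R]_n) :
  frob (A^T *m A) <= n%:R * frob A ^+ 2.
Proof.
have F_ge0 : 0 <= frob A ^+ 2 by exact: sqr_ge0.
rewrite -(ger0_norm F_ge0) -sqrtr_sqr.
apply: frob_le_sqr_sum => [|i j]; first exact: sqr_ge0.
rewrite -real_normK ?num_real // lerXn2r ?nnegrE ?normr_ge0 //.
exact: normr_mulmx_tr_le.
Qed.

Section UpperTriangularFactor.
Variables (R : realType) (n : nat) (h : R -> R -> R) (a : 'I_n -> R) (ca ch : R).
Hypotheses (ch_ge0 : 0 <= ch) (h_ge0 : forall i g, 0 <= h g (a i))
  (h_le : forall i g, h g (a i) <= ca + ch * g ^+ 2).

Lemma sqr_Lcal_le G i j :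
  Lcal h a G i j ^+ 2 <= (1 + ch) * G i j ^+ 2 + (i == j)%:R * ca.
Proof.
have G2_ge0 := sqr_ge0 (G i j).
rewrite mxE; case: ltnP => [ij|ji].
  have /negPf -> : i != j by apply: contraTneq ij => ->; rewrite ltnn.
  by rewrite mul0r addr0 mulrDl mul1r lerDl mulr_ge0.
case: eqVneq => [<-|_]; last by rewrite expr0n mul0r addr0 mulr_ge0 ?addr_ge0.
rewrite sqr_sqrtr // mul1r; apply: le_trans (h_le i _) _; nra.
Qed.

Lemma frob_Lcal_le G :
  frob (Lcal h a G) ^+ 2 <= n%:R * ca + (1 + ch) * frob G ^+ 2.
Proof.
have row_delta i : \sum_(j < n) (i == j)%:R * ca = ca.
  rewrite (bigD1 i) //= eqxx mul1r big1 ?addr0 // => j ji.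
  by rewrite eq_sym (negbTE ji) mul0r.
have -> : n%:R * ca = \sum_(i < n) ca by rewrite sumr_const card_ord mulr_natl.
rewrite !sqr_frob mulr_sumr.
rewrite -big_split /=; apply: ler_sum => i _.
rewrite -(row_delta i) mulr_sumr -big_split /=.
by apply: ler_sum => j _; rewrite addrC sqr_Lcal_le.
Qed.

Lemma frob_LL_le G :
  frob (LL h a G) <= n%:R ^+ 2 * ca + n%:R * (1 + ch) * frob G ^+ 2.
Proof.
apply: le_trans (frob_mulmx_tr_le (Lcal h a G)) _.
by rewrite expr2 -!mulrA -mulrDr ler_wpM2l // frob_Lcal_le.
Qed.

End UpperTriangularFactor.

Lemma admissible_h_uniform_bound (R : realType) (n : nat) (h : R -> R -> R)
    (a : 'I_n -> R) :
  admissible_h h -> (forall j, 0 < a j) ->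
  exists ca ch : R, 0 < ca /\ 0 < ch /\
    forall j g, h g (a j) <= ca + ch * g ^+ 2.
Proof.
move=> h_adm a_gt0.
have /fin_all_exists [c cP] : forall j, exists c : R * R,
    [/\ 0 <= c.1, 0 <= c.2 & forall g, h g (a j) <= c.1 + c.2 * g ^+ 2].
  move=> j; have [_ [_ [ch [ca [ch_gt0 [ca_gt0 h_le]]]]]] := h_adm _ (a_gt0 j).
  by exists (ca, ch); split; rewrite ?ltW.
have le_sum (f : 'I_n -> R) j : (forall k, 0 <= f k) -> f j <= 1 + \sum_k f k.
  move=> f_ge0; rewrite (bigD1 j) //=.
  have : 0 <= \sum_(k | k != j) f k by rewrite sumr_ge0.
  lra.
exists (1 + \sum_j (c j).1), (1 + \sum_j (c j).2).
have [c1_ge0 c2_ge0] : (forall j, 0 <= (c j).1) /\ (forall j, 0 <= (c j).2).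
  by split=> j; have [] := cP j.
split; [|split]; [by rewrite ltr_pwDl // sumr_ge0..|].
move=> j g; have [_ _ h_le] := cP j; apply: le_trans (h_le g) _.
by rewrite lerD ?ler_wpM2r ?sqr_ge0 ?le_sum.
Qed.

Lemma frob_LL_affine_bound (R : realType) (n : nat) (h : R -> R -> R)
    (a : 'I_n -> R) :
  admissible_h h -> (forall j, 0 < a j) ->
  exists gamma0 gamma1 : R, 0 < gamma0 /\ 0 < gamma1 /\
    forall G, frob (LL h a G) <= gamma0 + gamma1 * frob G ^+ 2.
Proof.
move=> h_adm a_gt0.
have [ca [ch [ca_gt0 [ch_gt0 h_le]]]] := admissible_h_uniform_bound h_adm a_gt0.
have h_ge0 i g : 0 <= h g (a i) by have [/(_ g)/ltW] := h_adm _ (a_gt0 i).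
exists (1 + n%:R ^+ 2 * ca), (1 + n%:R * (1 + ch)); split; [|split].
- by rewrite ltr_pwDl // mulr_ge0 // ltW.
- by rewrite ltr_pwDl // mulr_ge0 // addr_ge0 // ltW.
move=> G; apply: le_trans (frob_LL_le (ltW ch_gt0) h_ge0 h_le G) _.
apply: lerD; first by rewrite lerDr.
by apply: ler_wpM2r; rewrite ?sqr_ge0 // lerDr.
Qed.

Lemma sqr_le_affine_bound (R : realFieldType) (k c0 c1 x : R) :
  0 <= k -> k <= c0 + c1 * x -> k ^+ 2 <= 2 * c0 ^+ 2 + 2 * c1 ^+ 2 * x ^+ 2.
Proof.
move=> k_ge0 k_le; apply: le_trans (_ : (c0 + c1 * x) ^+ 2 <= _).
  by rewrite lerXn2r ?nnegrE // (le_trans k_ge0).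
by have := sqr_ge0 (c0 - c1 * x); lra.
Qed.

Lemma ge0_le_integralT d (T : measurableType d) (R : realType)
    (mu : {measure set T -> \bar R}) (f g : T -> \bar R) :
  (forall x, (0 <= f x)%E) -> (forall x, (f x <= g x)%E) ->
  (\int[mu]_x f x <= \int[mu]_x g x)%E.
Proof.
move=> f0 fg.
have g0 x : (0 <= g x)%E by exact: le_trans (f0 x) (fg x).
rewrite /integral !patch_setT.
have -> : (f^\-)%E = cst 0%E.
  by apply/funext => x; rewrite (ge0_funenegE (D:=setT)) ?inE.
have -> : (g^\-)%E = cst 0%E.
  by apply/funext => x; rewrite (ge0_funenegE (D:=setT)) ?inE.
apply: leeB => //; apply: ereal_sup_le => _ [s /= sf <-]; exists s => //= x.
by apply: le_trans (sf x) _; rewrite !funeposE le_max2.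
Qed.

Lemma integral_affine_bound_lty d (T : measurableType d) (R : realType)
    (mu : {finite_measure set T -> \bar R}) (f u : T -> R) (c0 c1 : R) :
  0 <= c0 -> 0 <= c1 -> measurable_fun setT u -> (forall x, 0 <= u x) ->
  (forall x, 0 <= f x) -> (forall x, f x <= c0 + c1 * u x) ->
  (\int[mu]_x (u x)%:E < +oo)%E -> (\int[mu]_x (f x)%:E < +oo)%E.
Proof.
move=> c0_ge0 c1_ge0 mu_u u_ge0 f_ge0 fu u_fin.
apply: (@le_lt_trans _ _ (\int[mu]_x (c0%:E + c1%:E * (u x)%:E))%E).
  apply: ge0_le_integralT => x; first by rewrite lee_fin.
  by rewrite -EFinM -EFinD lee_fin.
rewrite ge0_integralD //; last 2 first.
- by move=> x _; rewrite mule_ge0 // lee_fin.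
- exact/measurable_funeM/measurable_realfun.measurable_EFinP.
rewrite ge0_integralZl //; last 2 first.
- exact/measurable_realfun.measurable_EFinP.
- by move=> x _; rewrite lee_fin.
rewrite integral_cst //; apply: lte_add_pinfty.
  by rewrite lte_mul_pinfty ?lee_fin // -ge0_fin_numE ?fin_num_measure.
by rewrite lte_mul_pinfty // lee_fin.
Qed.

Lemma measurable_sqr_frob d (T : measurableType d) (R : realType) (n : nat)
    (M : T -> 'M[R]_n) :
  (forall i j, measurable_fun setT (fun w => M w i j)) ->
  measurable_fun setT (fun w => frob (M w) ^+ 2).
Proof.
move=> M_meas; under eq_fun do rewrite sqr_frob.
apply: measurable_sum => i; apply: measurable_sum => j.
exact: measurable_realfun.measurable_funX.
Qed.

Theorem proposition2 (R : realType) (d n : nat)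
  (D : set 'rV[R]_d) (HDopen : open D) (HDbnd : bounded_set D)
  (h : R -> R -> R) (Hh : admissible_h h)
  (a : 'I_n -> R) (Ha : forall j, 0 < a j)
  (dO : measure_display) (Omega : measurableType dO) (P : probability Omega R)
  (G : 'rV[R]_d -> Omega -> 'M[R]_n)
  (HGsym : forall x, D x -> forall w, symmetric_mx (G x w))
  (HGmeas : forall x, D x -> forall i j,
      measurable_fun setT (fun w => G x w i j))
  (HG2 : forall x, D x ->
      (\int[P]_w ((frob (G x w)) ^+ 2)%:E < +oo)%E) :
  let K0 := fun x w => LL h a (G x w) in
  exists gamma0 gamma1 : R, 0 < gamma0 /\ 0 < gamma1 /\
    (* (i) *)
    (forall x, D x ->
       {ae P, forall w, frob (K0 x w) <= gamma0 + gamma1 * (frob (G x w)) ^+ 2}) /\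
    (forall x, D x -> (\int[P]_w (frob (K0 x w))%:E < +oo)%E) /\
    (forall x, D x ->
       (\int[P]_w ((frob (G x w)) ^+ 4)%:E < +oo)%E ->
       (\int[P]_w ((frob (K0 x w)) ^+ 2)%:E < +oo)%E) /\
    (* (ii) *)
    (forall betaG : Omega -> R,
       measurable_fun setT betaG -> (forall w, 0 < betaG w) ->
       (forall x, D x -> {ae P, forall w, frob (G x w) <= betaG w}) ->
       let beta0 := fun w => gamma0 + gamma1 * betaG w ^+ 2 in
       (forall w, 0 < beta0 w) /\
       (forall x, D x -> {ae P, forall w, frob (K0 x w) <= beta0 w})).
Proof.
move=> K0.
have [gamma0 [gamma1 [gamma0_gt0 [gamma1_gt0 LL_le]]]] :=
  frob_LL_affine_bound Hh Ha.
have K0_le x w : frob (K0 x w) <= gamma0 + gamma1 * frob (G x w) ^+ 2 := LL_le _.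
have G2_meas x : D x -> measurable_fun setT (fun w => frob (G x w) ^+ 2).
  by move=> Dx; apply: measurable_sqr_frob; exact: HGmeas.
exists gamma0, gamma1; split=> //; split=> //; split.
  by move=> x _; apply: aeW => w; exact: K0_le.
split.
  move=> x Dx; apply: (integral_affine_bound_lty _ _ (G2_meas x Dx) _ _
    (K0_le x) (HG2 x Dx)); rewrite ?ltW // => w.
  - exact: sqr_ge0.
  - exact: frob_ge0.
split.
  move=> x Dx G4_fin.
  have G4_meas : measurable_fun setT (fun w => frob (G x w) ^+ 4).
    under eq_fun do rewrite (exprM _ 2 2).
    exact: measurable_realfun.measurable_funX (G2_meas x Dx).
  have K0_sqr_le w : frob (K0 x w) ^+ 2 <=
      2 * gamma0 ^+ 2 + 2 * gamma1 ^+ 2 * frob (G x w) ^+ 4.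
    by rewrite (exprM _ 2 2); apply: sqr_le_affine_bound (frob_ge0 _) (K0_le x w).
  apply: (integral_affine_bound_lty _ _ G4_meas _ _ K0_sqr_le G4_fin) => [||w|w].
  - by rewrite mulr_ge0 ?sqr_ge0.
  - by rewrite mulr_ge0 ?sqr_ge0.
  - by rewrite (exprM _ 2 2) sqr_ge0.
  - exact: sqr_ge0.
move=> betaG _ betaG_gt0 G_le beta0; split.
  by move=> w; rewrite ltr_wpDr // mulr_ge0 ?sqr_ge0 // ltW.
move=> x Dx; apply: filterS (G_le x Dx) => w Gw.
apply: le_trans (K0_le x w) _; rewrite lerD2l; apply: ler_wpM2l; first exact: ltW.
by rewrite lerXn2r ?nnegrE ?frob_ge0 // ltW.
Qed.
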